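(* Let $\mathbf{x}=(x_n)$ be a summable sequence of positive reals whose cardinal function $f$ is bounded, and let $z,w>0$ be reals such that either (1) $z+w>\sum_{n=1}^\infty x_n$, or (2) $z=w=\frac12\sum_{n=1}^\infty x_n$. Let $h$ be the cardinal function of the sequence $(z,w,x_1,x_2,\dots)$. Then $\max h\le 3\max f$. In particular, if $\mathrm{rng}(f)=\{1,2\}$ then $\max h\le6$.
   Context: For a summable sequence $\mathbf{x}=(x_n)$ of positive reals, $\mathcal{A}(\mathbf{x})=\{\sum_{n\in A}x_n: A\subseteq\mathbb{N}\}$ is its achievement set and its cardinal function $f$ assigns to $x\in\mathcal{A}(\mathbf{x})$ the cardinality (a positive integer, $\omega$, or $\mathfrak{c}$) of $\{(\varepsilon_n)\in\{0,1\}^{\mathbb{N}}:\sum\varepsilon_nx_n=x\}$. The cardinal function is bounded if there is $N\in\mathbb{N}$ with $f(x)\le N$ for all $x$; then $\max f$ denotes its largest value. *)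

From Stdlib Require Import Reals Lia.
From Coquelicot Require Import Coquelicot.
Open Scope R_scope.

Definition reps (x : nat -> R) (y : R) (e : nat -> bool) : Prop :=
  is_series (fun n => if e n then x n else 0) y.

Definition in_ach (x : nat -> R) (y : R) : Prop := exists e, reps x y e.

(* The set P of 0-1 sequences has at most N elements
   (any N+1 members contain two (pointwise) equal ones). *)
Definition card_le (P : (nat -> bool) -> Prop) (N : nat) : Prop :=
  forall g : nat -> nat -> bool,
    (forall i, (i <= N)%nat -> P (g i)) ->
    exists i j, (i < j <= N)%nat /\ forall n, g i n = g j n.

Definition card_ge (P : (nat -> bool) -> Prop) (k : nat) : Prop :=
  exists g : nat -> nat -> bool,
    (forall i, (i < k)%nat -> P (g i)) /\
    forall i j, (i < j < k)%nat -> exists n, g i n <> g j n.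

Definition card_eq (P : (nat -> bool) -> Prop) (k : nat) : Prop :=
  card_ge P k /\ card_le P k.

(* The cardinal function of x is bounded and its maximum value is M. *)
Definition is_max_card (x : nat -> R) (M : nat) : Prop :=
  (forall y, card_le (reps x y) M) /\
  exists y, in_ach x y /\ card_eq (reps x y) M.

Definition rng_card_12 (x : nat -> R) : Prop :=
  (forall y, in_ach x y -> card_eq (reps x y) 1 \/ card_eq (reps x y) 2) /\
  (exists y, in_ach x y /\ card_eq (reps x y) 1) /\
  (exists y, in_ach x y /\ card_eq (reps x y) 2).

Definition prepend2 (z w : R) (x : nat -> R) : nat -> R :=
  fun n => match n with 0%nat => z | 1%nat => w | S (S k) => x k end.

(* Split the representations of y by (z, w) by their first two digits (a, b): each
   of the four classes corresponds to the representations of y - a z - b w by x, so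
   each has at most M = max f elements.  The classes (1, 1) and (0, 0) can only both
   be nonempty when 0 <= y - z - w and y <= sum x, i.e. in case (2) with y = sum x;
   then they contain the unique representations of 0 and of sum x.  If moreover
   M = 1, the classes (1, 0) and (0, 1) are empty, since a representation of
   sum x / 2 and its complement would be two distinct ones. *)

From Stdlib Require Import Reals Lra Lia List Classical.
From Coquelicot Require Import Coquelicot.
Open Scope R_scope.

Lemma card_le_leq (P : (nat -> bool) -> Prop) (m n : nat) :
  (m <= n)%nat -> card_le P m -> card_le P n.
Proof.
  intros Hmn HP g Hg.
  destruct (HP g) as [i [j [Hij Heq]]]; [intros i Hi; apply Hg; lia|].
  exists i, j; split; [lia|exact Heq].
Qed.

Lemma card_le_empty (P : (nat -> bool) -> Prop) : (forall h, ~ P h) -> card_le P 0.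
Proof. intros HP g Hg. exfalso. apply (HP (g 0%nat)), Hg. lia. Qed.

Lemma card_le_unique (P : (nat -> bool) -> Prop) :
  (forall h h', P h -> P h' -> forall n, h n = h' n) -> card_le P 1.
Proof. intros HP g Hg. exists 0%nat, 1%nat. split; [lia|]. apply HP; apply Hg; lia. Qed.

Lemma ordered_collision (g : nat -> nat -> bool) (N i j : nat) :
  i <> j -> (i <= N)%nat -> (j <= N)%nat -> (forall n, g i n = g j n) ->
  exists i j, (i < j <= N)%nat /\ forall n, g i n = g j n.
Proof.
  intros Hij Hi Hj Heq.
  destruct (Nat.lt_ge_cases i j).
  - exists i, j; split; [lia|exact Heq].
  - exists j, i; split; [lia|intro n; symmetry; apply Heq].
Qed.

Lemma collision_in_filter (g : nat -> nat -> bool) (f : nat -> bool)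
    (A : (nat -> bool) -> Prop) (N m : nat) :
  (m < length (filter f (seq 0 (S N))))%nat ->
  (forall i, (i <= N)%nat -> f i = true -> A (g i)) ->
  card_le A m ->
  exists i j, (i < j <= N)%nat /\ forall n, g i n = g j n.
Proof.
  set (l := filter f (seq 0 (S N))).
  intros Hlen HA Hcard.
  assert (Hl : forall k, (k < length l)%nat ->
             (nth k l 0%nat <= N)%nat /\ f (nth k l 0%nat) = true).
  { intros k Hk. destruct (proj1 (filter_In _ _ _) (nth_In l 0%nat Hk)) as [Hseq Hf].
    apply in_seq in Hseq. split; [lia|exact Hf]. }
  destruct (Hcard (fun k => g (nth k l 0%nat))) as [k1 [k2 [Hk Heq]]].
  { intros k Hk. destruct (Hl k) as [HkN Hf]; [lia|]. apply HA; assumption. }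
  assert (Hnodup : NoDup l) by apply NoDup_filter, seq_NoDup.
  destruct (Hl k1) as [H1 _]; [lia|]. destruct (Hl k2) as [H2 _]; [lia|].
  apply (ordered_collision g N (nth k1 l 0%nat) (nth k2 l 0%nat)); auto.
  intro E. apply (proj1 (NoDup_nth l 0%nat) Hnodup) in E; lia.
Qed.

Lemma card_le_split (P A B : (nat -> bool) -> Prop) (d : (nat -> bool) -> bool) (m n : nat) :
  card_le A m -> card_le B n ->
  (forall h, P h -> if d h then A h else B h) ->
  card_le P (m + n).
Proof.
  intros HA HB Hd g Hg.
  pose proof (filter_length (fun i => d (g i)) (seq 0 (S (m + n)))) as Hsplit.
  rewrite length_seq in Hsplit.
  destruct (Nat.le_gt_cases (S m) (length (filter (fun i => d (g i)) (seq 0 (S (m + n))))))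
    as [Hm|Hn].
  - apply (collision_in_filter g (fun i => d (g i)) A (m + n) m); auto.
    intros i Hi Hf. specialize (Hd _ (Hg i Hi)). rewrite Hf in Hd. exact Hd.
  - apply (collision_in_filter g (fun i => negb (d (g i))) B (m + n) n); [lia| |auto].
    intros i Hi Hf. specialize (Hd _ (Hg i Hi)). destruct (d (g i)); [discriminate|exact Hd].
Qed.

Lemma reps_false (x : nat -> R) : reps x 0 (fun _ => false).
Proof.
  unfold reps, is_series.
  eapply filterlim_ext; [|apply filterlim_const].
  intro n. symmetry. exact (@sum_n_m_const_zero R_AbelianMonoid 0 n).
Qed.

Lemma card_le_reps_pos (x : nat -> R) (M : nat) :
  (forall v, card_le (reps x v) M) -> (1 <= M)%nat.
Proof.
  intro HM. destruct M as [|M]; [|lia]. exfalso.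
  destruct (HM 0 (fun _ _ => false)) as [i [j [Hij _]]]; [intros; apply reps_false|lia].
Qed.

Section Representations.
Variable x : nat -> R.
Hypothesis x_pos : forall n, 0 < x n.
Hypothesis x_summable : ex_series x.

Lemma reps_le_Series v e : reps x v e -> v <= Series x.
Proof.
  intro He. rewrite <- (is_series_unique _ _ He).
  apply Series_le; [|exact x_summable].
  intro n; destruct (e n); split; try lra; left; apply x_pos.
Qed.

Lemma reps_compl v e : reps x v e -> reps x (Series x - v) (fun n => negb (e n)).
Proof.
  intro He.
  pose proof (is_series_minus _ _ _ _ (Series_correct _ x_summable) He) as Hdiff.
  eapply is_series_ext; [|exact Hdiff].
  intro n; simpl. unfold plus, opp; simpl. destruct (e n); simpl; ring.
Qed.

Lemma reps_nonneg v e : reps x v e -> 0 <= v.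
Proof. intro He. pose proof (reps_le_Series _ _ (reps_compl _ _ He)). lra. Qed.

Lemma reps_term_le v e n : reps x v e -> e n = true -> x n <= v.
Proof.
  intros He Hn. apply is_series_Reals in He.
  assert (Hterm : forall k, 0 <= (if e k then x k else 0)).
  { intro k; destruct (e k); [left; apply x_pos|right; reflexivity]. }
  pose proof (sum_incr _ n _ He Hterm) as Hsum.
  destruct n as [|n].
  - simpl in Hsum. rewrite Hn in Hsum. exact Hsum.
  - rewrite tech5, Hn in Hsum.
    apply Rle_trans with (2 := Hsum). rewrite <- (Rplus_0_l (x (S n))) at 1.
    apply Rplus_le_compat_r, cond_pos_sum, Hterm.
Qed.

Lemma reps_0_false e : reps x 0 e -> forall n, e n = false.
Proof.
  intros He n. destruct (e n) eqn:En; [|reflexivity].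
  pose proof (reps_term_le _ _ n He En). pose proof (x_pos n). lra.
Qed.

Lemma reps_Series_true e : reps x (Series x) e -> forall n, e n = true.
Proof.
  intros He n. pose proof (reps_compl _ _ He) as Hc.
  rewrite Rminus_diag in Hc.
  pose proof (reps_0_false _ Hc n) as Hn. cbn beta in Hn.
  destruct (e n); [reflexivity|discriminate].
Qed.

Lemma card_le_reps_0 : card_le (reps x 0) 1.
Proof.
  apply card_le_unique. intros h h' Hh Hh' n.
  now rewrite (reps_0_false _ Hh n), (reps_0_false _ Hh' n).
Qed.

Lemma card_le_reps_Series : card_le (reps x (Series x)) 1.
Proof.
  apply card_le_unique. intros h h' Hh Hh' n.
  now rewrite (reps_Series_true _ Hh n), (reps_Series_true _ Hh' n).
Qed.

Lemma card_le_reps_half : card_le (reps x (Series x / 2)) 1 -> card_le (reps x (Series x / 2)) 0.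
Proof.
  intro Hcard. apply card_le_empty. intros e He.
  assert (Hc : reps x (Series x / 2) (fun n => negb (e n))).
  { replace (Series x / 2) with (Series x - Series x / 2) at 1 by field.
    apply reps_compl, He. }
  destruct (Hcard (fun i => if Nat.eqb i 0 then e else fun n => negb (e n)))
    as [i [j [Hij Heq]]].
  { intros i _. destruct (Nat.eqb i 0); assumption. }
  assert (i = 0%nat /\ j = 1%nat) as [-> ->] by lia.
  specialize (Heq 0%nat). simpl in Heq. destruct (e 0%nat); discriminate.
Qed.

End Representations.

Section Prepend.
Variables (x : nat -> R) (z w y : R).

Definition prepend2_class (a b : bool) (h : nat -> bool) : Prop :=
  h 0%nat = a /\ h 1%nat = b /\
  reps x (y - (if a then z else 0) - (if b then w else 0)) (fun n => h (S (S n))).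

Lemma reps_prepend2 h : reps (prepend2 z w x) y h -> prepend2_class (h 0%nat) (h 1%nat) h.
Proof.
  unfold reps; intro Hh. repeat split.
  set (a := fun n => if h n then prepend2 z w x n else 0) in Hh.
  change (is_series (fun n => a (S (S n))) (y - a 0%nat - a 1%nat)).
  apply (is_series_incr_1 (fun n => a (S n))), is_series_incr_1.
  unfold plus; simpl. now replace (y - a 0%nat - a 1%nat + a 1%nat + a 0%nat) with y by ring.
Qed.

Lemma card_le_prepend2_class (a b : bool) (m : nat) :
  card_le (reps x (y - (if a then z else 0) - (if b then w else 0))) m ->
  card_le (prepend2_class a b) m.
Proof.
  intros Hcard g Hg.
  destruct (Hcard (fun i n => g i (S (S n)))) as [i [j [Hij Heq]]].
  { intros i Hi. apply Hg; auto. }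
  exists i, j; split; [exact Hij|].
  destruct (Hg i) as [Hi0 [Hi1 _]]; [lia|]. destruct (Hg j) as [Hj0 [Hj1 _]]; [lia|].
  intros [|[|n]]; [congruence|congruence|apply Heq].
Qed.

Lemma card_le_reps_prepend2_classes (c11 c10 c01 c00 : nat) :
  card_le (prepend2_class true true) c11 -> card_le (prepend2_class true false) c10 ->
  card_le (prepend2_class false true) c01 -> card_le (prepend2_class false false) c00 ->
  card_le (reps (prepend2 z w x) y) ((c11 + c10) + (c01 + c00)).
Proof.
  intros H11 H10 H01 H00.
  assert (Hrow : forall a c1 c0,
             card_le (prepend2_class a true) c1 -> card_le (prepend2_class a false) c0 ->
             card_le (fun h => prepend2_class a (h 1%nat) h) (c1 + c0)).
  { intros a c1 c0 H1 H0. apply (card_le_split _ _ _ (fun h => h 1%nat) _ _ H1 H0).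
    intros h Hh. destruct (h 1%nat); exact Hh. }
  apply (card_le_split _ _ _ (fun h => h 0%nat) _ _ (Hrow _ _ _ H11 H10) (Hrow _ _ _ H01 H00)).
  intros h Hh. pose proof (reps_prepend2 _ Hh) as Hclass. destruct (h 0%nat); exact Hclass.
Qed.

End Prepend.

Lemma prepend2_extreme_classes (x : nat -> R) (z w y : R) e e' :
  (forall n, 0 < x n) -> ex_series x ->
  (z + w > Series x \/ (z = Series x / 2 /\ w = Series x / 2)) ->
  reps x (y - z - w) e -> reps x y e' ->
  z = Series x / 2 /\ w = Series x / 2 /\ y = Series x.
Proof.
  intros x_pos x_summable Hzw He He'.
  pose proof (reps_nonneg x x_pos x_summable _ _ He).
  pose proof (reps_le_Series x x_pos x_summable _ _ He').
  destruct Hzw as [Hzw|[Hz Hw]]; [lra|]. repeat split; lra.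
Qed.

Lemma card_le_reps_prepend2 (x : nat -> R) (z w : R) (M : nat) :
  (forall n, 0 < x n) -> ex_series x ->
  (forall v, card_le (reps x v) M) ->
  (z + w > Series x \/ (z = Series x / 2 /\ w = Series x / 2)) ->
  forall y, card_le (reps (prepend2 z w x) y) (3 * M).
Proof.
  intros x_pos x_summable HM Hzw y.
  pose proof (card_le_reps_pos x M HM) as HM1.
  assert (Hclass : forall a b, card_le (prepend2_class x z w y a b) M)
    by (intros; apply card_le_prepend2_class, HM).
  destruct (classic ((exists e, reps x (y - z - w) e) /\ (exists e, reps x y e)))
    as [[[e He] [e' He']]|Hempty].
  - destruct (prepend2_extreme_classes x z w y e e' x_pos x_summable Hzw He He')
      as (Hz & Hw & Hy).
    assert (H11 : card_le (prepend2_class x z w y true true) 1).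
    { apply card_le_prepend2_class. replace (y - z - w) with 0 by lra.
      apply card_le_reps_0; assumption. }
    assert (H00 : card_le (prepend2_class x z w y false false) 1).
    { apply card_le_prepend2_class. replace (y - 0 - 0) with (Series x) by lra.
      apply card_le_reps_Series; assumption. }
    destruct (Nat.eq_dec M 1) as [->|HM2].
    + pose proof (card_le_reps_half x x_summable (HM _)) as Hhalf.
      assert (H10 : card_le (prepend2_class x z w y true false) 0).
      { apply card_le_prepend2_class. now replace (y - z - 0) with (Series x / 2) by lra. }
      assert (H01 : card_le (prepend2_class x z w y false true) 0).
      { apply card_le_prepend2_class. now replace (y - 0 - w) with (Series x / 2) by lra. }
      eapply card_le_leq, card_le_reps_prepend2_classes; [|eassumption..]. lia.
    + eapply card_le_leq, card_le_reps_prepend2_classes; [|eauto..]. lia.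
  - assert (Hnone : forall v, ~ (exists e, reps x v e) -> card_le (reps x v) 0)
      by (intros v Hv; apply card_le_empty; intros e He; apply Hv; exists e; exact He).
    apply not_and_or in Hempty as [H11|H00].
    + apply Hnone, (card_le_prepend2_class x z w y true true) in H11.
      eapply card_le_leq, card_le_reps_prepend2_classes; [|eauto..]. lia.
    + apply Hnone in H00. rewrite <- (Rminus_0_r y), <- (Rminus_0_r (y - 0)) in H00.
      apply (card_le_prepend2_class x z w y false false) in H00.
      eapply card_le_leq, card_le_reps_prepend2_classes; [|eauto..]. lia.
Qed.

Lemma rng_card_12_card_le_2 (x : nat -> R) : rng_card_12 x -> forall v, card_le (reps x v) 2.
Proof.
  intros [Hrng _] v. destruct (classic (in_ach x v)) as [Hv|Hv].
  - destruct (Hrng v Hv) as [[_ H]|[_ H]]; eapply card_le_leq; try exact H; lia.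
  - eapply card_le_leq, card_le_empty; [lia|]. intros e He; apply Hv; exists e; exact He.
Qed.

Theorem lemma7p1 (x : nat -> R) (z w : R) :
  (forall n, 0 < x n) -> ex_series x ->
  (exists N : nat, forall y, card_le (reps x y) N) ->
  0 < z -> 0 < w ->
  (z + w > Series x \/ (z = Series x / 2 /\ w = Series x / 2)) ->
  (forall M : nat, is_max_card x M ->
     forall y, card_le (reps (prepend2 z w x) y) (3 * M)) /\
  (rng_card_12 x -> forall y, card_le (reps (prepend2 z w x) y) 6).
Proof.
  intros x_pos x_summable _ _ _ Hzw. split.
  - intros M [HM _]. exact (card_le_reps_prepend2 x z w M x_pos x_summable HM Hzw).
  - intro Hrng. exact (card_le_reps_prepend2 x z w 2 x_pos x_summable
                         (rng_card_12_card_le_2 x Hrng) Hzw).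
Qed.
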